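(* Let $S$ be a rectangular band semigroup and let $\omega$ be a separable weight on $S$. Then $\ell^{1}(S,\omega)$ is pseudo-amenable if and only if $S$ is a singleton.
   Context: A rectangular band semigroup is a semigroup $S$ with $s^2=s$ and $sts=s$ for all $s,t\in S$; every such $S$ is isomorphic to $L\times R$ where $L$ is a left zero semigroup ($st=s$ for all $s,t$) and $R$ is a right zero semigroup ($st=t$ for all $s,t$). A weight on a semigroup is a function $\omega$ into $(0,\infty)$ with $\omega(st)\le\omega(s)\omega(t)$; a weight $\omega$ on $S\cong L\times R$ is separable if there are weights $\omega_L$ on $L$ and $\omega_R$ on $R$ with $\omega(l,r)=\omega_L(l)\omega_R(r)$. The Beurling algebra $\ell^{1}(S,\omega)$ is the space of $f=\sum_s f(s)\delta_s$ with $\sum_s|f(s)|\omega(s)<\infty$, with convolution $\delta_s*\delta_t=\delta_{st}$. For a Banach algebra $\mathcal{A}$, let $\pi:\mathcal{A}\hat{\otimes}\mathcal{A}\to\mathcal{A}$, $\pi(a\otimes b)=ab$, with the bimodule structure $c\cdot(a\otimes b)=ca\otimes b$, $(a\otimes b)\cdot c=a\otimes bc$. An approximate diagonal is a net $(m_i)$ in $\mathcal{A}\hat{\otimes}\mathcal{A}$ with $a\cdot m_i-m_i\cdot a\to0$ and $a\pi(m_i)\to a$ for all $a\in\mathcal{A}$; $\mathcal{A}$ is pseudo-amenable if it has an approximate diagonal. *)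

From HB Require Import structures.
From mathcomp Require Import all_boot all_order all_algebra.
From mathcomp Require Import all_classical all_reals.
From mathcomp Require Import ereal esum.
From mathcomp Require Import complex.

Set Implicit Arguments.
Unset Strict Implicit.
Unset Printing Implicit Defensive.

Import Order.TTheory GRing.Theory Num.Theory.
Local Open Scope classical_set_scope.
Local Open Scope ring_scope.

Section Beurling.
Variable R : realType.

Definition cmod (z : R[i]) : R := ComplexField.Normc.normc z.

Definition rsum (T : choiceType) (A : set T) (g : T -> R) : R :=
  fine (\esum_(x in A) (Num.max (g x) 0)%:E)%E
  - fine (\esum_(x in A) (Num.max (- g x) 0)%:E)%E.

Definition csum (T : choiceType) (A : set T) (f : T -> R[i]) : R[i] :=
  Complex (rsum A (fun x => let: Complex a _ := f x in a)) (rsum A (fun x => let: Complex _ b := f x in b)).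

Definition wnorm (T : choiceType) (w : T -> R) (f : T -> R[i]) : \bar R :=
  (\esum_(x in [set: T]) (cmod (f x) * w x)%:E)%E.

Definition inl1 (T : choiceType) (w : T -> R) (f : T -> R[i]) : Prop :=
  (wnorm w f < +oo)%E.

Variable S : choiceType.
Variable mul : S -> S -> S.

Definition conv (f g : S -> R[i]) (u : S) : R[i] :=
  csum [set p : S * S | mul p.1 p.2 = u] (fun p => f p.1 * g p.2).

(* the weight on S x S realizing  l^1(S,w) \hat\otimes l^1(S,w) = l^1(S x S, w x w) *)
Definition tweight (w : S -> R) (p : S * S) : R := w p.1 * w p.2.

(* bimodule actions on l^1(S x S):  c.(a (x) b) = ca (x) b,  (a (x) b).c = a (x) bc *)
Definition lact (a : S -> R[i]) (m : S * S -> R[i]) (q : S * S) : R[i] :=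
  csum [set p : S * S | mul p.1 p.2 = q.1] (fun p => a p.1 * m (p.2, q.2)).

Definition ract (m : S * S -> R[i]) (a : S -> R[i]) (q : S * S) : R[i] :=
  csum [set p : S * S | mul p.1 p.2 = q.2] (fun p => m (q.1, p.1) * a p.2).

(* the product map  pi(a (x) b) = ab *)
Definition piS (m : S * S -> R[i]) (u : S) : R[i] :=
  csum [set p : S * S | mul p.1 p.2 = u] m.

End Beurling.

Definition directed (I : Type) (le : I -> I -> Prop) : Prop :=
  inhabited I /\ (forall i, le i i) /\ (forall i j k, le i j -> le j k -> le i k)
  /\ (forall i j, exists k, le i k /\ le j k).

Definition net_to0 (R : realType) (I : Type) (le : I -> I -> Prop)
  (x : I -> \bar R) : Prop :=
  forall e : R, 0 < e -> exists i0 : I, forall i, le i0 i -> (x i < e%:E)%E.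

Definition rectangular_band (S : Type) (mul : S -> S -> S) : Prop :=
  (forall s t u, mul s (mul t u) = mul (mul s t) u) /\
  (forall s, mul s s = s) /\ (forall s t, mul (mul s t) s = s).

Definition is_weight (R : realType) (S : Type) (mul : S -> S -> S) (w : S -> R) : Prop :=
  (forall s, 0 < w s) /\ (forall s t, w (mul s t) <= w s * w t).

(* S = L x R (left zero x right zero) and w(l,r) = wL(l) wR(r) *)
Definition separable_weight (R : realType) (S : Type) (mul : S -> S -> S) (w : S -> R) : Prop :=
  exists (L Rt : Type) (phi : L * Rt -> S),
    bijective phi /\
    (forall l r l' r', mul (phi (l, r)) (phi (l', r')) = phi (l, r')) /\
    exists (wL : L -> R) (wR : Rt -> R),
      is_weight (fun l _ : L => l) wL /\ is_weight (fun _ r : Rt => r) wR /\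
      (forall l r, w (phi (l, r)) = wL l * wR r).

(* l^1(S,w) is pseudo-amenable: it has an approximate diagonal *)
Definition pseudo_amenable (R : realType) (S : choiceType) (mul : S -> S -> S) (w : S -> R) : Prop :=
  exists (I : Type) (le : I -> I -> Prop) (m : I -> S * S -> R[i]),
    directed le /\
    (forall i, inl1 (tweight w) (m i)) /\
    (forall a : S -> R[i], inl1 w a ->
       net_to0 le (fun i => wnorm (tweight w)
                     (fun q => lact mul a (m i) q - ract mul (m i) a q)) /\
       net_to0 le (fun i => wnorm w
                     (fun u => conv mul a (piS mul (m i)) u - a u))).

From mathcomp Require Import all_boot all_order all_algebra.
From mathcomp Require Import all_classical all_reals.
From mathcomp Require Import ereal esum complex lra.

(* A weight on a band is at least 1, since w s = w (s s) <= (w s)^2, so an l^1(S, w)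
   estimate controls every single coefficient.  If s and t lie in the same row
   (s y = t y for all y), then delta_s * pi(m) = delta_t * pi(m), and the approximate
   identity condition for delta_s and delta_t makes the coefficient of this element at s
   close to both 1 and 0.  If s and s' lie in the same column (x s = x s' for all x),
   then m . delta_s = m . delta_s' while delta_s' . m vanishes on the block
   [q | s q.1 = q.1 /\ s q.2 = s]; so the commutation conditions for delta_s and
   delta_s' make delta_s . m small there.  Its sum over that block is the coefficient of
   delta_s * pi(m) at s, which should be close to 1.  Finally s s' lies in the row of s
   and the column of s', so s = s s' = s'.  Conversely, on a singleton delta_(s,s) is a
   diagonal. *)

Set Implicit Arguments.
Unset Strict Implicit.
Unset Printing Implicit Defensive.

Import Order.TTheory GRing.Theory Num.Theory.
Local Open Scope classical_set_scope.
Local Open Scope ring_scope.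

Section RealSums.
Variable R : realType.
Implicit Types (T J : choiceType).

Lemma max0_ge0 (x : R) : 0 <= Num.max x 0.
Proof. by rewrite le_max lexx orbT. Qed.

Lemma max0B (x : R) : Num.max x 0 - Num.max (- x) 0 = x.
Proof. by have [x0|x0] := leP 0 x; [rewrite max_r | rewrite max_l]; lra. Qed.

Lemma max0D (x : R) : Num.max x 0 + Num.max (- x) 0 = `|x|.
Proof.
by have [x0|x0] := leP 0 x; [rewrite max_r ?ger0_norm | rewrite max_l ?ltr0_norm]; lra.
Qed.

Lemma esum_subset T (A B : set T) (a : T -> \bar R) :
  A `<=` B -> (forall x, B x -> 0 <= a x)%E ->
  (\esum_(x in A) a x <= \esum_(x in B) a x)%E.
Proof.
move=> AB a0; rewrite (esumID A B) //.
by rewrite (setIidr AB) leeDl // esum_ge0 // => x [/a0].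
Qed.

Lemma eq_esum_set T (A B : set T) (a : T -> \bar R) :
  (forall x, a x != 0%E -> A x <-> B x) ->
  \esum_(x in A) a x = \esum_(x in B) a x.
Proof.
move=> AB; rewrite esum_mkcond [RHS]esum_mkcond; apply: eq_esum => x _.
have [->|/AB [AxBx BxAx]] := eqVneq (a x) 0%E; first by rewrite !if_same.
suff -> : (x \in A) = (x \in B) by [].
by apply/idP/idP => /set_mem => [/AxBx|/BxAx] /mem_set.
Qed.

Lemma esum_fibers T J (A : set T) (k : T -> J) (a : T -> \bar R) :
  (forall x, A x -> 0 <= a x)%E ->
  \esum_(x in A) a x = \esum_(j in [set: J]) \esum_(x in A `&` k @^-1` [set j]) a x.
Proof.
move=> a0; rewrite esum_esum; last by move=> j x _ [/a0].
rewrite (reindex_esum A _ (fun x => (k x, x)) (fun z => a z.2)) //; split.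
- by move=> x Ax.
- by move=> x y _ _ [].
- by move=> [j x] [_ [Ax /= <-]]; exists x.
Qed.

Lemma eq_rsum T (A : set T) (g h : T -> R) :
  (forall x, A x -> g x = h x) -> rsum A g = rsum A h.
Proof.
by move=> gh; rewrite /rsum; congr (fine _ - fine _); apply: eq_esum => x /gh ->.
Qed.

Lemma eq_rsum_set T (A B : set T) (g : T -> R) :
  (forall x, g x != 0 -> A x <-> B x) -> rsum A g = rsum B g.
Proof.
move=> AB; rewrite /rsum; congr (fine _ - fine _); apply: eq_esum_set => x gx;
  by apply: AB; apply: contraNneq gx => ->; rewrite ?oppr0 maxxx.
Qed.

Lemma rsum0 T (A : set T) (g : T -> R) : (forall x, A x -> g x = 0) -> rsum A g = 0.
Proof. by move=> g0; rewrite /rsum !esum1 ?subrr // => x /g0 ->; rewrite ?oppr0 maxxx. Qed.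

Lemma rsum_set1 T (t : T) (g : T -> R) : rsum [set t] g = g t.
Proof. by rewrite /rsum !esum_set1 ?lee_fin ?max0_ge0 //= max0B. Qed.

Lemma reindex_rsum T T' (P : set T) (Q : set T') (e : T -> T') (g : T' -> R) :
  set_bij P Q e -> rsum Q g = rsum P (g \o e).
Proof. by move=> bij; rewrite /rsum !(reindex_esum P Q e). Qed.

Lemma lee_abs_rsum T (A : set T) (g : T -> R) :
  ((`|rsum A g|)%:E <= \esum_(x in A) (`|g x|)%:E)%E.
Proof.
have -> : (\esum_(x in A) (`|g x|)%:E = \esum_(x in A) (Num.max (g x) 0)%:E
    + \esum_(x in A) (Num.max (- g x) 0)%:E)%E.
  by rewrite -esumD => [|x _|x _]; rewrite ?lee_fin ?max0_ge0 //;
    apply: eq_esum => x _; rewrite -EFinD max0D.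
have P0 : (0 <= \esum_(x in A) (Num.max (g x) 0)%:E)%E.
  by apply: esum_ge0 => x _; rewrite lee_fin max0_ge0.
have N0 : (0 <= \esum_(x in A) (Num.max (- g x) 0)%:E)%E.
  by apply: esum_ge0 => x _; rewrite lee_fin max0_ge0.
rewrite /rsum; move: P0 N0.
case: (\esum_(x in A) _)%E => [p||] //; case: (\esum_(x in A) _)%E => [n||] //=;
  rewrite ?leey // !lee_fin => p0 n0.
by rewrite (le_trans (ler_normB _ _)) // !ger0_norm.
Qed.

Lemma rsumB_ge0 T (A : set T) (p n : T -> R) :
  (forall x, 0 <= p x) -> (forall x, 0 <= n x) ->
  (\esum_(x in A) (p x)%:E < +oo)%E -> (\esum_(x in A) (n x)%:E < +oo)%E ->
  rsum A (fun x => p x - n x) =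
    fine (\esum_(x in A) (p x)%:E) - fine (\esum_(x in A) (n x)%:E).
Proof.
move=> p0 n0 pfin nfin.
have fin_le (h k : T -> R) : (forall x, 0 <= h x) -> (forall x, h x <= k x) ->
    (\esum_(x in A) (k x)%:E < +oo)%E -> \esum_(x in A) (h x)%:E \is a fin_num.
  move=> h0 hk kfin; rewrite ge0_fin_numE; last by apply: esum_ge0 => x _; rewrite lee_fin.
  by apply: le_lt_trans kfin; apply: le_esum => x _; rewrite lee_fin.
have balance : (\esum_(x in A) (Num.max (p x - n x) 0)%:E + \esum_(x in A) (n x)%:E
    = \esum_(x in A) (Num.max (- (p x - n x)) 0)%:E + \esum_(x in A) (p x)%:E)%E.
  rewrite -!esumD; try by move=> x _; rewrite lee_fin ?max0_ge0.
  by apply: eq_esum => x _; rewrite -!EFinD; congr EFin; have := max0B (p x - n x); lra.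
have pos_fin : \esum_(x in A) (Num.max (p x - n x) 0)%:E \is a fin_num.
  by apply: (fin_le _ p) => // x; rewrite ?max0_ge0 // ge_max p0 andbT lerBlDr lerDl.
have neg_fin : \esum_(x in A) (Num.max (- (p x - n x)) 0)%:E \is a fin_num.
  by apply: (fin_le _ n) => // x; rewrite ?max0_ge0 // ge_max n0 andbT opprB lerBlDr lerDl.
have p_fin := fin_le p p p0 (fun x => lexx _) pfin.
have n_fin := fin_le n n n0 (fun x => lexx _) nfin.
by move/(congr1 fine): balance; rewrite /rsum !fineD //; lra.
Qed.

Lemma rsum_fibers T J (A : set T) (k : T -> J) (g : T -> R) :
  (\esum_(x in A) (`|g x|)%:E < +oo)%E ->
  rsum A g = rsum [set: J] (fun j => rsum (A `&` k @^-1` [set j]) g).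
Proof.
move=> gfin; pose F j (h : T -> R) := \esum_(x in A `&` k @^-1` [set j]) (h x)%:E.
have fin (h : T -> R) : (forall x, h x <= `|g x|) -> (\esum_(x in A) (h x)%:E < +oo)%E.
  by move=> hg; apply: le_lt_trans gfin; apply: le_esum => x _; rewrite lee_fin.
have fibersE (h : T -> R) : (forall x, 0 <= h x) -> (forall x, h x <= `|g x|) ->
    \esum_(j in [set: J]) (fine (F j h))%:E = \esum_(x in A) (h x)%:E.
  move=> h0 hg; rewrite (esum_fibers k) => [|x _]; last by rewrite lee_fin.
  apply: eq_esum => j _; rewrite fineK // ge0_fin_numE; last first.
    by apply: esum_ge0 => x _; rewrite lee_fin.
  apply: le_lt_trans (fin h hg).
  by apply: esum_subset => [x []|x _] //; rewrite lee_fin.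
have pos_le x : Num.max (g x) 0 <= `|g x| by rewrite ge_max ler_norm normr_ge0.
have neg_le x : Num.max (- g x) 0 <= `|g x| by rewrite ge_max -normrN ler_norm normr_ge0.
rewrite [RHS](@rsumB_ge0 _ _ (fun j => fine (F j (fun x => Num.max (g x) 0)))
                             (fun j => fine (F j (fun x => Num.max (- g x) 0)))).
- by rewrite /rsum !fibersE // => x; exact: max0_ge0.
- by move=> j; apply/fine_ge0/esum_ge0 => x _; rewrite lee_fin max0_ge0.
- by move=> j; apply/fine_ge0/esum_ge0 => x _; rewrite lee_fin max0_ge0.
all: rewrite ?fibersE //; by [apply: fin | move=> x; apply: max0_ge0].
Qed.

End RealSums.

Section ComplexSums.
Variable R : realType.
Implicit Types (T J : choiceType).

Lemma cmodE (z : R[i]) : cmod z = `|z : Rcomplex R|.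
Proof. by []. Qed.

Lemma cmod1 : cmod (1 : R[i]) = 1.
Proof. exact: ComplexField.Normc.normc1. Qed.

Lemma cmod_Re (z : R[i]) : `|complex.Re z| <= cmod z.
Proof.
by case: z => a b; rewrite /cmod /= -sqrtr_sqr ler_sqrt ?lerDl ?addr_ge0 ?sqr_ge0.
Qed.

Lemma cmod_Im (z : R[i]) : `|complex.Im z| <= cmod z.
Proof.
by case: z => a b; rewrite /cmod /= -sqrtr_sqr ler_sqrt ?lerDr ?addr_ge0 ?sqr_ge0.
Qed.

Lemma cmod_le_ReIm (z : R[i]) : cmod z <= `|complex.Re z| + `|complex.Im z|.
Proof.
case: z => a b; have -> : (a +i* b = (a +i* 0) + (0 +i* b))%C.
  by apply/eqP; rewrite eq_complex /= addr0 add0r !eqxx.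
rewrite cmodE (le_trans (ler_normD _ _)) // -!cmodE /cmod /=.
by rewrite !expr0n /= !addr0 !add0r !sqrtr_sqr.
Qed.

Definition delta (T : eqType) (s t : T) : R[i] := (t == s)%:R.

Lemma csumE T (A : set T) (f : T -> R[i]) :
  csum A f = (rsum A (fun x => complex.Re (f x)) +i* rsum A (fun x => complex.Im (f x)))%C.
Proof. by []. Qed.

Lemma eq_csum T (A : set T) (f g : T -> R[i]) :
  (forall x, A x -> f x = g x) -> csum A f = csum A g.
Proof. by move=> fg; rewrite !csumE; congr Complex; apply: eq_rsum => x /fg ->. Qed.

Lemma eq_csum_set T (A B : set T) (f : T -> R[i]) :
  (forall x, f x != 0 -> A x <-> B x) -> csum A f = csum B f.
Proof.
by move=> AB; rewrite !csumE; congr Complex; apply: eq_rsum_set => x fx;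
  apply: AB; apply: contraNneq fx => ->.
Qed.

Lemma csum0 T (A : set T) (f : T -> R[i]) : (forall x, A x -> f x = 0) -> csum A f = 0.
Proof. by move=> f0; rewrite csumE !rsum0 // => x /f0 ->. Qed.

Lemma csum_set1 T (t : T) (f : T -> R[i]) : csum [set t] f = f t.
Proof. by rewrite csumE !rsum_set1; case: (f t). Qed.

Lemma reindex_csum T T' (P : set T) (Q : set T') (e : T -> T') (f : T' -> R[i]) :
  set_bij P Q e -> csum Q f = csum P (f \o e).
Proof. by move=> bij; rewrite !csumE !(reindex_rsum _ bij). Qed.

Lemma csum_setX1 T T' (A : set T) (b : T') (f : T * T' -> R[i]) :
  csum (A `*` [set b]) f = csum A (fun t => f (t, b)).
Proof.
apply: reindex_csum; split=> [t At //|t u _ _ [] //|[t u] [At /= ->]].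
by exists t.
Qed.

Lemma csum_set1X T T' (a : T) (B : set T') (f : T * T' -> R[i]) :
  csum ([set a] `*` B) f = csum B (fun t => f (a, t)).
Proof.
apply: reindex_csum; split=> [t Bt //|t u _ _ [] //|[t u] [/= -> Bu]].
by exists u.
Qed.

Lemma csum_fibers T J (A : set T) (B : set J) (k : T -> J) (f : T -> R[i]) :
  (forall x, A x -> B (k x)) -> (\esum_(x in A) (cmod (f x))%:E < +oo)%E ->
  csum A f = csum B (fun j => csum (A `&` k @^-1` [set j]) f).
Proof.
move=> AB ffin; rewrite [RHS](eq_csum_set (B := [set: J])); last first.
  move=> j fj; split=> // _; apply: contrapT => Bj; move/eqP: fj; apply.
  by apply: csum0 => x [/AB + /= kx]; rewrite kx.
rewrite !csumE /=; congr Complex; apply: rsum_fibers; apply: le_lt_trans ffin;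
  by apply: le_esum => x _; rewrite lee_fin ?cmod_Re ?cmod_Im.
Qed.

Lemma lee_cmod_csum T (A : set T) (f : T -> R[i]) :
  ((cmod (csum A f))%:E <= (\esum_(x in A) (cmod (f x))%:E) *+ 2)%E.
Proof.
have bound (g : T -> R) : (forall x, `|g x| <= cmod (f x)) ->
    ((`|rsum A g|)%:E <= \esum_(x in A) (cmod (f x))%:E)%E.
  move=> gf; apply: le_trans (lee_abs_rsum A g) _.
  by apply: le_esum => x _; rewrite lee_fin.
rewrite mule2n; apply: le_trans (leeD (bound _ (fun x => cmod_Re (f x)))
                                      (bound _ (fun x => cmod_Im (f x)))).
by rewrite -EFinD lee_fin csumE (le_trans (cmod_le_ReIm _)).
Qed.

Lemma lee_cmod_wnorm T (w : T -> R) (f : T -> R[i]) (u : T) :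
  (forall x, 1 <= w x) -> ((cmod (f u))%:E <= wnorm w f)%E.
Proof.
move=> w1; have w0 x : 0 <= w x by apply: le_trans (w1 x).
apply: (@le_trans _ _ (\esum_(x in [set u]) (cmod (f x) * w x)%:E)).
  by rewrite esum_set1 ?lee_fin ?mulr_ge0 ?ler_peMr ?cmodE.
by apply: esum_subset => // x _; rewrite lee_fin mulr_ge0 ?cmodE.
Qed.

Lemma inl1_summable T (w : T -> R) (f : T -> R[i]) (A : set T) :
  (forall x, 1 <= w x) -> inl1 w f -> (\esum_(x in A) (cmod (f x))%:E < +oo)%E.
Proof.
move=> w1; apply: le_lt_trans.
apply: (@le_trans _ _ (\esum_(x in [set: T]) (cmod (f x))%:E)).
  by apply: esum_subset => // x _; rewrite lee_fin cmodE.
by apply: le_esum => x _; rewrite lee_fin ler_peMr ?cmodE.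
Qed.

Lemma inl1_delta T (w : T -> R) (s : T) : (forall x, 0 <= w x) -> inl1 w (delta s).
Proof.
move=> w0; rewrite /inl1 /wnorm (eq_esum_set (B := [set s])).
  by rewrite esum_set1 ?ltry // lee_fin mulr_ge0 ?cmodE.
move=> x; rewrite /delta; have [->|_] := eqVneq x s; first by [].
by rewrite cmodE normr0 mul0r eqxx.
Qed.

End ComplexSums.

Lemma weight_ge1 (R : realType) (S : Type) (mul : S -> S -> S) (w : S -> R) :
  is_weight mul w -> (forall s, mul s s = s) -> forall s, 1 <= w s.
Proof.
by case=> w0 wM mulss s; rewrite -(ler_pMr _ (w0 s)); have := wM s s; rewrite mulss.
Qed.

Section Convolution.
Variables (R : realType) (S : choiceType) (mul : S -> S -> S).

Lemma csum_delta_l (s v : S) (F : S -> R[i]) :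
  csum [set p : S * S | mul p.1 p.2 = v] (fun p => delta R s p.1 * F p.2) =
  csum [set t | mul s t = v] F.
Proof.
rewrite (eq_csum_set (B := [set s] `*` [set t | mul s t = v])).
  by rewrite csum_set1X; apply: eq_csum => t _; rewrite /delta eqxx mul1r.
move=> [x y]; rewrite /delta /=; have [-> _|_] := eqVneq x s; last by rewrite mul0r eqxx.
by split=> [e|[_ e]]; first split.
Qed.

Lemma csum_delta_r (s v : S) (F : S -> R[i]) :
  csum [set p : S * S | mul p.1 p.2 = v] (fun p => F p.1 * delta R s p.2) =
  csum [set t | mul t s = v] F.
Proof.
rewrite (eq_csum_set (B := [set t | mul t s = v] `*` [set s])).
  by rewrite csum_setX1; apply: eq_csum => t _; rewrite /delta eqxx mulr1.
move=> [x y]; rewrite /delta /=; have [-> _|_] := eqVneq y s; last by rewrite mulr0 eqxx.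
by split=> [e|[e _]]; first split.
Qed.

Lemma conv_delta (s u : S) (g : S -> R[i]) :
  conv mul (delta R s) g u = csum [set t | mul s t = u] g.
Proof. exact: csum_delta_l. Qed.

Lemma lact_delta (s : S) (m : S * S -> R[i]) (q : S * S) :
  lact mul (delta R s) m q = csum [set t | mul s t = q.1] (fun t => m (t, q.2)).
Proof. exact: csum_delta_l. Qed.

Lemma ract_delta (s : S) (m : S * S -> R[i]) (q : S * S) :
  ract mul m (delta R s) q = csum [set t | mul t s = q.2] (fun t => m (q.1, t)).
Proof. exact: csum_delta_r. Qed.

End Convolution.

Section RectangularBand.
Variables (R : realType) (S : choiceType) (mul : S -> S -> S).
Hypothesis mulA : forall s t u, mul s (mul t u) = mul (mul s t) u.
Hypothesis mulss : forall s, mul s s = s.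
Hypothesis mul_rect : forall s t, mul (mul s t) s = s.

Lemma mul_drop_mid x y z : mul (mul x y) z = mul x z.
Proof. by rewrite -{2}(mul_rect x (mul y z)) -!mulA (mulA z x z) mul_rect. Qed.

Lemma lact_delta_eq0 (s : S) (m : S * S -> R[i]) (q : S * S) :
  mul s q.1 != q.1 -> lact mul (delta R s) m q = 0.
Proof.
move=> sq; rewrite lact_delta; apply: csum0 => t /= st.
by move: sq; rewrite -st mulA mulss eqxx.
Qed.

Lemma conv_delta_piS (s : S) (m : S * S -> R[i]) :
  (\esum_(p in [set: S * S]) (cmod (m p))%:E < +oo)%E ->
  conv mul (delta R s) (piS mul m) s =
  csum [set q | mul s q.1 = q.1 /\ mul s q.2 = s] (lact mul (delta R s) m).
Proof.
move=> mfin; set P := [set p : S * S | mul s p.2 = s].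
have Pfin : (\esum_(p in P) (cmod (m p))%:E < +oo)%E.
  by apply: le_lt_trans mfin; apply: esum_subset => // p _; rewrite lee_fin cmodE.
have sp12 p : mul s (mul p.1 p.2) = mul s p.2 by rewrite mulA mul_drop_mid.
transitivity (csum P m).
  rewrite conv_delta [RHS](csum_fibers (B := [set t | mul s t = s])
                                       (k := fun p => mul p.1 p.2)) //=; last first.
    by move=> p; rewrite /P /= sp12.
  apply: eq_csum => t /= st; rewrite /piS; congr csum; apply/seteqP.
  by split=> [p /= pt|p [_ /= //]]; split=> //; rewrite /P /= -sp12 pt.
rewrite (csum_fibers (B := [set q | mul s q.1 = q.1 /\ mul s q.2 = s])
                     (k := fun p => (mul s p.1, p.2))) //; last first.
  by move=> p /= sp; rewrite mulA mulss.
apply: eq_csum => -[a b] /= [sa sb]; rewrite lact_delta -csum_setX1; congr csum.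
apply/seteqP; split=> [[x y] [/= sy [<- <-]] //|[x y] [/= sx ->]].
by split; [rewrite /P /= sb | rewrite sx].
Qed.

End RectangularBand.

Lemma cmodD_sub1_ge1 (R : realType) (c : R[i]) : 1 <= cmod c + cmod (c - 1).
Proof.
by rewrite -(cmod1 R) !cmodE (le_trans _ (ler_normB _ _)) // opprB addrC subrK.
Qed.

Section Defects.
Variables (R : realType) (S : choiceType) (mul : S -> S -> S) (w : S -> R).
Hypothesis w_ge1 : forall s, 1 <= w s.

Definition comm_defect (s : S) (m : S * S -> R[i]) : \bar R :=
  wnorm (tweight w) (fun q => lact mul (delta R s) m q - ract mul m (delta R s) q).

Definition unit_defect (s : S) (m : S * S -> R[i]) : \bar R :=
  wnorm w (fun u => conv mul (delta R s) (piS mul m) u - delta R s u).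

Lemma tweight_ge1 (q : S * S) : 1 <= tweight w q.
Proof. exact: mulr_ege1. Qed.

Lemma lee_cmod_conv_sub1 (s : S) (m : S * S -> R[i]) :
  ((cmod (conv mul (delta R s) (piS mul m) s - 1))%:E <= unit_defect s m)%E.
Proof. by rewrite /unit_defect (le_trans _ (lee_cmod_wnorm _ s w_ge1)) //= /delta eqxx. Qed.

Lemma unit_defect_row (s t : S) (m : S * S -> R[i]) :
  s != t -> (forall y, mul s y = mul t y) ->
  (1 <= unit_defect s m + unit_defect t m)%E.
Proof.
move=> st srow; set c := conv mul (delta R s) (piS mul m) s.
have ct : ((cmod c)%:E <= unit_defect t m)%E.
  have dts : delta R t s = 0 by rewrite /delta (negPf st).
  have -> : c = conv mul (delta R t) (piS mul m) s.
    rewrite /c !conv_delta; congr csum.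
    by apply/seteqP; split=> y /=; rewrite srow.
  by rewrite /unit_defect (le_trans _ (lee_cmod_wnorm _ s w_ge1)) //= dts subr0.
rewrite addeC; apply: le_trans (leeD ct (lee_cmod_conv_sub1 s m)).
by rewrite -EFinD lee_fin cmodD_sub1_ge1.
Qed.

Hypothesis mulA : forall s t u, mul s (mul t u) = mul (mul s t) u.
Hypothesis mulss : forall s, mul s s = s.
Hypothesis mul_rect : forall s t, mul (mul s t) s = s.

Lemma lee_esum_lact_delta (s s' : S) (m : S * S -> R[i]) :
  s != s' -> (forall x, mul x s = mul x s') ->
  (\esum_(q in [set q | mul s q.1 = q.1 /\ mul s q.2 = s])
     (cmod (lact mul (delta R s) m q))%:E <= comm_defect s m + comm_defect s' m)%E.
Proof.
move=> ss' scol; set Q := [set q | _ /\ _].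
set X := lact mul (delta R s) m; set Y := ract mul m (delta R s).
have YE : ract mul m (delta R s') = Y.
  apply/funext => q; rewrite /Y !ract_delta; congr csum.
  by apply/seteqP; split=> t /=; rewrite scol.
have Z0 q : Q q -> lact mul (delta R s') m q = 0.
  case=> sq _; apply: lact_delta_eq0 => //; apply: contra ss' => /eqP s'q.
  by rewrite -(mul_rect s q.1) -(mul_rect s' q.1) sq s'q scol.
have tw0 q : 0 <= tweight w q by apply: le_trans (tweight_ge1 q).
apply: (@le_trans _ _ (\esum_(q in Q) ((cmod (X q - Y q) * tweight w q)%:E
    + (cmod (lact mul (delta R s') m q - Y q) * tweight w q)%:E))).
  apply: le_esum => q Qq; rewrite -EFinD lee_fin Z0 // sub0r -mulrDl.
  apply: (@le_trans _ _ (cmod (X q) * tweight w q)).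
    by rewrite ler_peMr ?cmodE ?tweight_ge1.
  rewrite ler_wpM2r // !cmodE (le_trans _ (ler_normB _ _)) //.
  by rewrite opprK subrK.
rewrite esumD; try by move=> q _; rewrite lee_fin mulr_ge0 ?cmodE.
rewrite /comm_defect /wnorm YE.
by apply: leeD; apply: esum_subset => // q _; rewrite lee_fin mulr_ge0 ?cmodE.
Qed.

Lemma unit_defect_col (s s' : S) (m : S * S -> R[i]) :
  s != s' -> (forall x, mul x s = mul x s') -> inl1 (tweight w) m ->
  (1 <= unit_defect s m + (comm_defect s m + comm_defect s' m) *+ 2)%E.
Proof.
move=> ss' scol ml1; set c := conv mul (delta R s) (piS mul m) s.
have cbound : ((cmod c)%:E <= (comm_defect s m + comm_defect s' m) *+ 2)%E.
  rewrite /c conv_delta_piS //; last exact: inl1_summable tweight_ge1 ml1.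
  apply: le_trans (lee_cmod_csum _ _) _; rewrite !mule2n.
  by apply: leeD; apply: lee_esum_lact_delta.
rewrite addeC; apply: le_trans (leeD cbound (lee_cmod_conv_sub1 s m)).
by rewrite -EFinD lee_fin cmodD_sub1_ge1.
Qed.

End Defects.

Section Nets.
Variables (I : Type) (le : I -> I -> Prop).
Hypothesis le_directed : directed le.

Definition eventually_net (P : I -> Prop) := exists i0, forall i, le i0 i -> P i.

Lemma eventually_netI (P Q : I -> Prop) :
  eventually_net P -> eventually_net Q -> eventually_net (fun i => P i /\ Q i).
Proof.
case: le_directed => _ [_ [le_tr le_ub]] [i1 P1] [i2 Q2].
have [k [i1k i2k]] := le_ub i1 i2.
by exists k => i ki; split; [apply: P1; apply: le_tr ki | apply: Q2; apply: le_tr ki].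
Qed.

Lemma eventually_net_witness (P : I -> Prop) : eventually_net P -> exists i, P i.
Proof. by case: le_directed => _ [le_refl _] [i0 P0]; exists i0; apply: P0. Qed.

End Nets.

Lemma pseudo_amenable_approx (R : realType) (S : choiceType) (mul : S -> S -> S)
    (w : S -> R) (e : R) (s t : S) :
  (forall s, 1 <= w s) -> pseudo_amenable mul w -> 0 < e ->
  exists m, [/\ inl1 (tweight w) m,
    (comm_defect mul w s m < e%:E)%E, (comm_defect mul w t m < e%:E)%E,
    (unit_defect mul w s m < e%:E)%E & (unit_defect mul w t m < e%:E)%E].
Proof.
move=> w1 [I [le [m [dir [ml1 approx]]]]] e0.
have w0 x : 0 <= w x by apply: le_trans (w1 x).
have [cs us] := approx _ (inl1_delta s w0).
have [ct ut] := approx _ (inl1_delta t w0).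
have [i [[[csi cti] usi] uti]] := eventually_net_witness dir
  (eventually_netI dir (eventually_netI dir (eventually_netI dir (cs e e0) (ct e e0))
                                           (us e e0)) (ut e e0)).
by exists (m i).
Qed.

Section PseudoAmenable.
Variables (R : realType) (S : choiceType) (mul : S -> S -> S) (w : S -> R).
Hypothesis w_ge1 : forall s, 1 <= w s.
Hypothesis pa : pseudo_amenable mul w.

Lemma pseudo_amenable_row_eq (s t : S) : (forall y, mul s y = mul t y) -> s = t.
Proof.
move=> srow; apply/eqP; apply/negPn/negP => st.
have e0 : 0 < 1 / 4 :> R by lra.
have [m [_ _ _ us ut]] := pseudo_amenable_approx s t w_ge1 pa e0.
have := le_lt_trans (unit_defect_row w_ge1 m st srow) (lteD us ut).
by rewrite -EFinD lte_fin; lra.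
Qed.

Hypothesis hband : rectangular_band mul.

Lemma pseudo_amenable_col_eq (s s' : S) : (forall x, mul x s = mul x s') -> s = s'.
Proof.
case: hband => mulA [mulss mul_rect] scol; apply/eqP; apply/negPn/negP => ss'.
have e0 : 0 < 1 / 8 :> R by lra.
have [m [ml1 cs cs' us _]] := pseudo_amenable_approx s s' w_ge1 pa e0.
have := unit_defect_col w_ge1 mulA mulss mul_rect ss' scol ml1; rewrite mule2n.
move/le_lt_trans/(_ (lteD us (lteD (lteD cs cs') (lteD cs cs')))).
by rewrite -!EFinD lte_fin; lra.
Qed.

Lemma pseudo_amenable_trivial (s s' : S) : s = s'.
Proof.
case: hband => mulA [_ mul_rect].
have ss' : s = mul s s'.
  by apply: pseudo_amenable_row_eq => y; rewrite mul_drop_mid.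
by apply: pseudo_amenable_col_eq => x; rewrite {1}ss' mulA mul_drop_mid.
Qed.

End PseudoAmenable.

Lemma trivial_pseudo_amenable (R : realType) (S : choiceType) (mul : S -> S -> S)
    (w : S -> R) (s0 : S) :
  is_weight mul w -> (forall t, t = s0) -> pseudo_amenable mul w.
Proof.
move=> [w_gt0 _] S1; have all_eq (x y : S) : x = y by rewrite (S1 x) (S1 y).
have csum_pt (A : set (S * S)) f : A (s0, s0) -> csum A f = f (s0, s0).
  move=> As0; rewrite (_ : A = [set (s0, s0)]) ?csum_set1 //.
  by apply/seteqP; split=> [[x y] _|[x y] [-> ->]] //=; rewrite (S1 x) (S1 y).
have delta1 p : delta R (s0, s0) p = 1.
  by case: p => x y; rewrite /delta (S1 x) (S1 y) eqxx.
exists unit, (fun _ _ => True), (fun _ => delta R (s0, s0)); split.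
  by split; [exact: (inhabits tt) | split=> //; split=> // [] []; exists tt].
split=> [_|a _]; first by apply: inl1_delta => p; rewrite mulr_ge0 ?ltW.
split=> e e0; exists tt => _ _; rewrite /wnorm esum1 ?lte_fin // => x _.
- by rewrite /lact /ract !csum_pt ?delta1 ?mulr1 ?mul1r ?subrr ?cmodE ?normr0 ?mul0r.
- by rewrite (S1 x) /conv /piS !csum_pt ?delta1 ?mulr1 ?subrr ?cmodE ?normr0 ?mul0r.
Qed.

Theorem theorem2p7 (R : realType) (S : choiceType) (mul : S -> S -> S) (w : S -> R)
  (hS : inhabited S) (hband : rectangular_band mul)
  (hw : is_weight mul w) (hsep : separable_weight mul w) :
  pseudo_amenable mul w <-> exists s0 : S, forall t : S, t = s0.
Proof.
have w_ge1 := weight_ge1 hw (proj1 (proj2 hband)).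
split=> [pa|[s0 S1]]; last exact: trivial_pseudo_amenable hw S1.
by case: hS => s0; exists s0 => t; exact: (pseudo_amenable_trivial w_ge1 pa hband t s0).
Qed.
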